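(* The coefficient matrix $\mathbf Z_\mathrm{p} = \mathbf M\, \mathbf Q\, \hat{\mathbf Z}\, \mathbf Q\, \mathbf G\, \mathbf P\, \mathbf G^\mathrm{T}\, \mathbf Q\, \hat{\mathbf Z}\, \mathbf Q\, \mathbf M$ of the proposed preconditioned formulation is symmetric, positive-definite.
   Context: Setting: BEM (Galerkin) discretization of the symmetric formulation of the EEG forward problem on $N$ nested, smooth, triangulated surfaces $\Gamma_1,\dots,\Gamma_N$ (piecewise-homogeneous conductivities $\sigma_i$, exterior conductivity zero), with piecewise-linear pyramid functions $\lambda$ on vertices and piecewise-constant patch functions $\pi$ on cells. $\mathbf Z=\begin{pmatrix}\mathbf N & \mathbf D^*\\ \mathbf D & \mathbf S\end{pmatrix}$ is the (symmetric) system matrix of the symmetric formulation (hypersingular, adjoint double-layer, double-layer, single-layer blocks with conductivity-dependent coefficients; last block row/column removed). $\hat{\mathbf Z}=\mathbf Z+\boldsymbol\zeta\boldsymbol\zeta^\mathrm{T}$ is its deflated, invertible version, where $\boldsymbol\zeta$ is zero except for the block $\mathbf G_{N,\lambda\lambda}^\mathrm{T}\mathbf 1$ corresponding to the potential on $\Gamma_N$. $\mathbf Q$ is a diagonal matrix with positive entries $q_{V,i}\sqrt{R_i}$ on the potential unknowns of $\Gamma_i$ and $q_{C,i}/\sqrt{R_i}$ on the current unknowns, with $q_{V,i}=\max(\sigma_i,\sigma_{i+1})^{-1/2}$, $q_{C,i}=\min(\sigma_i,\sigma_{i+1})^{1/2}$ and $R_i>0$ a characteristic size of $\Gamma_i$.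 $\mathbf P$ is block-diagonal with blocks $R_i^{-2}\hat{\mathbf\Delta}_i^{-1}$ ($i=1,\dots,N$) and $R_i^{2}\hat{\tilde{\mathbf\Delta}}_i$ ($i=1,\dots,N-1$), where $\hat{\mathbf\Delta}_i=\mathbf\Delta_i+\mathbf G_{i,\lambda\lambda}^\mathrm{T}\mathbf 1\mathbf 1^\mathrm{T}\mathbf G_{i,\lambda\lambda}$ and $\hat{\tilde{\mathbf\Delta}}_i=\tilde{\mathbf\Delta}_i+\mathbf G_{i,\tilde\lambda\tilde\lambda}^\mathrm{T}\mathbf 1\mathbf 1^\mathrm{T}\mathbf G_{i,\tilde\lambda\tilde\lambda}$ are the (symmetric positive-definite) deflated Laplace–Beltrami stiffness matrices discretized with primal pyramid functions and with dual pyramid functions (on the barycentric dual mesh), respectively; $\mathbf G_{i,fg}$ denotes Gram matrices $(f_{i,m},g_{i,n})_{L^2(\Gamma_i)}$. $\mathbf G$ is block-diagonal with identity blocks on the potential unknowns and blocks $\mathbf G_{i,\tilde\lambda\pi}^{-1}$ on the current unknowns. $\mathbf M$ is block-diagonal with blocks $\mathbf G_{i,\lambda\lambda}^{-1/2}$ and $\mathbf G_{i,\pi\pi}^{-1/2}$. *)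

From HB Require Import structures.
From mathcomp Require Import all_boot all_order all_algebra.
Set Implicit Arguments. Unset Strict Implicit. Unset Printing Implicit Defensive.
Import Order.TTheory GRing.Theory Num.Theory.
Local Open Scope ring_scope.

(* Conventions (0-based): surfaces Gamma_0 .. Gamma_(N-1), nested; the
   conductivity inside Gamma_i (between Gamma_(i-1) and Gamma_i) is sigma i,
   the exterior one is sigma N (= 0).  nv i = number of vertices of Gamma_i
   (pyramid functions lambda / potential unknowns), nc i = number of cells of
   Gamma_i (patch functions pi, dual pyramid functions tilde-lambda, current
   unknowns).  Potential unknowns: Gamma_0..Gamma_(N-1); current unknowns:
   Gamma_0..Gamma_(N-2) (last block row/column removed). *)

Section Defs.
Variable R : rcfType.

Definition spd n (A : 'M[R]_n) : Prop :=
  A^T = A /\ forall x : 'cV[R]_n, x != 0 -> 0 < (x^T *m A *m x) 0 0.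

Definition is_inv_sqrt n (B A : 'M[R]_n) : Prop :=
  spd B /\ B *m B *m A = 1%:M.

Definition deflate n (Delta Gram : 'M[R]_n) : 'M[R]_n :=
  Delta + (Gram^T *m (const_mx 1 : 'cV[R]_n)) *m ((const_mx 1 : 'cV[R]_n)^T *m Gram).

Variables (N : nat) (nv nc : nat -> nat).

Definition nP := (\sum_(i < N) nv i)%N.
Definition nC := (\sum_(j < N.-1) nc j)%N.

Definition bdiag (A : forall i : 'I_N, 'M[R]_(nv i))
  (B : forall j : 'I_N.-1, 'M[R]_(nc j)) : 'M[R]_(nP + nC) :=
  block_mx (\mxdiag_(i < N) A i) 0 0 (\mxdiag_(j < N.-1) B j).

Definition Zsys (Nh : 'M[R]_nP) (D : 'M[R]_(nC, nP)) (S : 'M[R]_nC)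
  : 'M[R]_(nP + nC) := block_mx Nh D^T D S.

Definition zeta (Gll : forall i : nat, 'M[R]_(nv i)) : 'cV[R]_(nP + nC) :=
  col_mx (\mxcol_(i < N) (if (i : nat) == N.-1
                          then (Gll i)^T *m const_mx 1 else 0)) 0.

Definition Zhat Nh D S Gll : 'M[R]_(nP + nC) :=
  Zsys Nh D S + zeta Gll *m (zeta Gll)^T.

Definition qV (sigma : nat -> R) (i : nat) : R :=
  (Num.sqrt (Num.max (sigma i) (sigma i.+1)))^-1.
Definition qC (sigma : nat -> R) (i : nat) : R :=
  Num.sqrt (Num.min (sigma i) (sigma i.+1)).

Definition Qmat (sigma Rs : nat -> R) : 'M[R]_(nP + nC) :=
  bdiag (fun i => (qV sigma i * Num.sqrt (Rs i))%:M)
        (fun j => (qC sigma j / Num.sqrt (Rs j))%:M).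

Definition Pmat (Rs : nat -> R)
  (Dl : forall i : nat, 'M[R]_(nv i)) (Gll : forall i : nat, 'M[R]_(nv i))
  (Dt : forall j : nat, 'M[R]_(nc j)) (Gtt : forall j : nat, 'M[R]_(nc j))
  : 'M[R]_(nP + nC) :=
  bdiag (fun i => (Rs i ^- 2) *: invmx (deflate (Dl i) (Gll i)))
        (fun j => (Rs j ^+ 2) *: deflate (Dt j) (Gtt j)).

Definition Gmat (Gtp : forall j : nat, 'M[R]_(nc j)) : 'M[R]_(nP + nC) :=
  bdiag (fun i => 1%:M) (fun j => invmx (Gtp j)).

Definition Mmat (Mll : forall i : nat, 'M[R]_(nv i))
  (Mpp : forall j : nat, 'M[R]_(nc j)) : 'M[R]_(nP + nC) :=
  bdiag (fun i => Mll i) (fun j => Mpp j).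

End Defs.

From HB Require Import structures.
From mathcomp Require Import all_boot all_order all_algebra.
Import Order.TTheory GRing.Theory Num.Theory.
Local Open Scope ring_scope.
Set Implicit Arguments. Unset Strict Implicit. Unset Printing Implicit Defensive.

(* Writing K := Q Zhat Q M, the matrix is K^T (G P G^T) K, because M, Q and
   Zhat are symmetric.  P is block diagonal with SPD blocks (positive multiples
   of deflated Laplace-Beltrami matrices and their inverses), and G, Q, M and
   Zhat are invertible.  A congruence X |-> K^T X K by an invertible K
   preserves positive-definiteness, so two congruences conclude. *)

Section SymmetricPositiveDefinite.
Variable R : rcfType.

Lemma spd_form_ge0 n (A : 'M[R]_n) (x : 'cV[R]_n) :
  spd A -> 0 <= (x^T *m A *m x) 0 0.
Proof.
case=> _ pA; have [->|nx] := eqVneq x 0; first by rewrite mulmx0 mxE.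
exact/ltW/pA.
Qed.

Lemma spd_congr n (A K : 'M[R]_n) :
  spd A -> K \in unitmx -> spd (K^T *m A *m K).
Proof.
case=> sA pA uK; split; first by rewrite !trmx_mul trmxK sA mulmxA.
move=> x nx; have nKx : K *m x != 0.
  by apply: contra nx => /eqP Kx0; rewrite -(mulKmx uK x) Kx0 mulmx0.
by have := pA _ nKx; rewrite !trmx_mul !mulmxA.
Qed.

Lemma spd_unitmx n (A : 'M[R]_n) : spd A -> A \in unitmx.
Proof.
case=> _ pA; rewrite unitmxE unitfE; apply/negP => /det0P [v nv vA].
have := pA v^T; rewrite trmx_eq0 trmxK vA mul0mx mxE ltxx.
by move/(_ nv).
Qed.

Lemma spd_invmx n (A : 'M[R]_n) : spd A -> spd (invmx A).
Proof.
move=> spdA; have uA := spd_unitmx spdA.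
have -> : invmx A = (invmx A)^T *m A *m invmx A.
  by rewrite trmx_inv spdA.1 -mulmxA mulmxV // mulmx1.
by apply: spd_congr; rewrite ?unitmx_inv.
Qed.

Lemma spdZ n (c : R) (A : 'M[R]_n) : 0 < c -> spd A -> spd (c *: A).
Proof.
move=> c_gt0 [sA pA]; split; first by rewrite linearZ /= sA.
by move=> x nx; rewrite -scalemxAr -scalemxAl mxE mulr_gt0 ?pA.
Qed.

Lemma spd_block_diag m n (A : 'M[R]_m) (B : 'M[R]_n) :
  spd A -> spd B -> spd (block_mx A 0 0 B).
Proof.
move=> spdA spdB; split.
  by rewrite tr_block_mx spdA.1 spdB.1 !trmx0.
move=> x nx; rewrite -(vsubmxK x) tr_col_mx mul_row_block !mulmx0 addr0 add0r
  mul_row_col mxE.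
have [u0|nu] := eqVneq (usubmx x) 0; last first.
  by rewrite ltr_wpDr ?spd_form_ge0 // spdA.2.
have nd : dsubmx x != 0.
  by apply: contra nx => /eqP d0; rewrite -(vsubmxK x) u0 d0 col_mx0.
by rewrite ltr_wpDl ?spd_form_ge0 // spdB.2.
Qed.

Lemma spd_mxdiag p (p_ : 'I_p -> nat) (A : forall i, 'M[R]_(p_ i)) :
  (forall i, spd (A i)) -> spd (\mxdiag_i A i).
Proof.
move=> spdA; split.
  by rewrite tr_mxdiag; apply: eq_mxdiag => i; case: (spdA i).
move=> x nx.
rewrite -(submxcolK x) tr_mxcol mul_mxrow_mxdiag mul_mxrow_mxcol summxE.
have [i ni] : exists i, submxcol x i != 0.
  apply/existsP; apply: contraR nx; rewrite negb_exists => /forallP x0.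
  rewrite -(submxcolK x) -(mxcol0 (p_ := p_)); apply/eqP.
  by apply: eq_mxcol => i; apply/eqP/negPn/x0.
rewrite (bigD1 i) //= ltr_wpDr ?(spdA i).2 //.
by apply: sumr_ge0 => j _; apply: spd_form_ge0.
Qed.

Lemma unitmx_block_diag m n (A : 'M[R]_m) (B : 'M[R]_n) :
  A \in unitmx -> B \in unitmx -> block_mx A 0 0 B \in unitmx.
Proof. by rewrite !unitmxE det_ublock unitrM => -> ->. Qed.

Lemma unitmx_mxdiag p (p_ : 'I_p -> nat) (A : forall i, 'M[R]_(p_ i)) :
  (forall i, A i \in unitmx) -> \mxdiag_i A i \in unitmx.
Proof.
move=> uA; rewrite -row_free_unit /row_free rank_mxdiag.
by apply/eqP/eq_bigr => i _; apply: mxrank_unit.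
Qed.

Lemma unitmx_scalar n (a : R) : a != 0 -> (a%:M : 'M[R]_n) \in unitmx.
Proof. by move=> a0; rewrite -scalemx1 unitmxZ ?unitmx1 ?unitfE. Qed.

Lemma inv_sqrt_unitmx n (B A : 'M[R]_n) : is_inv_sqrt B A -> B \in unitmx.
Proof. by case=> _; rewrite -mulmxA => /mulmx1_unit []. Qed.

End SymmetricPositiveDefinite.

Section BlockDiagonal.
Variables (R : rcfType) (N : nat) (nv nc : nat -> nat).
Variables (A : forall i : 'I_N, 'M[R]_(nv i))
  (B : forall j : 'I_N.-1, 'M[R]_(nc j)).

Lemma bdiag_sym :
  (forall i, (A i)^T = A i) -> (forall j, (B j)^T = B j) ->
  (bdiag A B)^T = bdiag A B.
Proof.
move=> sA sB; rewrite /bdiag tr_block_mx !trmx0 !tr_mxdiag.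
by congr block_mx; apply: eq_mxdiag.
Qed.

Lemma unitmx_bdiag :
  (forall i, A i \in unitmx) -> (forall j, B j \in unitmx) ->
  bdiag A B \in unitmx.
Proof. by move=> uA uB; apply: unitmx_block_diag; apply: unitmx_mxdiag. Qed.

Lemma spd_bdiag :
  (forall i, spd (A i)) -> (forall j, spd (B j)) -> spd (bdiag A B).
Proof. by move=> pA pB; apply: spd_block_diag; apply: spd_mxdiag. Qed.

End BlockDiagonal.

Lemma qV_gt0 (R : rcfType) (sigma : nat -> R) i : 0 < sigma i -> 0 < qV sigma i.
Proof. by move=> s_gt0; rewrite invr_gt0 sqrtr_gt0 lt_max s_gt0. Qed.

Lemma qC_gt0 (R : rcfType) (sigma : nat -> R) i :
  0 < sigma i -> 0 < sigma i.+1 -> 0 < qC sigma i.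
Proof. by move=> s_gt0 s1_gt0; rewrite sqrtr_gt0 lt_min s_gt0 s1_gt0. Qed.

Lemma Zhat_sym (R : rcfType) (N : nat) (nv nc : nat -> nat)
  (Nh : 'M[R]_(nP N nv)) (D : 'M[R]_(nC N nc, nP N nv)) (S : 'M[R]_(nC N nc))
  (Gll : forall i : nat, 'M[R]_(nv i)) :
  Nh^T = Nh -> S^T = S -> (Zhat Nh D S Gll)^T = Zhat Nh D S Gll.
Proof.
move=> sNh sS.
by rewrite /Zhat linearD /= trmx_mul trmxK /Zsys tr_block_mx sNh sS trmxK.
Qed.

Theorem proposition1 (R : rcfType) (N : nat) (nv nc : nat -> nat)
  (sigma Rs : nat -> R)
  (Nh : 'M[R]_(nP N nv)) (D : 'M[R]_(nC N nc, nP N nv)) (S : 'M[R]_(nC N nc))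
  (Gll : forall i : nat, 'M[R]_(nv i))      (* G_{i,lambda lambda} *)
  (Gpp : forall j : nat, 'M[R]_(nc j))      (* G_{i,pi pi} *)
  (Gtp : forall j : nat, 'M[R]_(nc j))      (* G_{i,tilde-lambda pi} *)
  (Gtt : forall j : nat, 'M[R]_(nc j))      (* G_{i,tilde-lambda tilde-lambda} *)
  (Dl : forall i : nat, 'M[R]_(nv i))       (* Delta_i *)
  (Dt : forall j : nat, 'M[R]_(nc j))       (* tilde Delta_i *)
  (Mll : forall i : nat, 'M[R]_(nv i))      (* G_{i,lambda lambda}^{-1/2} *)
  (Mpp : forall j : nat, 'M[R]_(nc j))      (* G_{i,pi pi}^{-1/2} *)
  (HN : (0 < N)%N)
  (Hsigma : forall k, (k < N)%N -> 0 < sigma k)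
  (Hext : sigma N = 0)
  (HR : forall i, 0 < Rs i)
  (HNh : Nh^T = Nh) (HS : S^T = S)
  (HZhat : Zhat Nh D S Gll \in unitmx)
  (HGll : forall i, (i < N)%N -> spd (Gll i))
  (HGpp : forall j, (j < N.-1)%N -> spd (Gpp j))
  (HGtp : forall j, (j < N.-1)%N -> Gtp j \in unitmx)
  (HDl : forall i, (i < N)%N -> spd (deflate (Dl i) (Gll i)))
  (HDt : forall j, (j < N.-1)%N -> spd (deflate (Dt j) (Gtt j)))
  (HMll : forall i, (i < N)%N -> is_inv_sqrt (Mll i) (Gll i))
  (HMpp : forall j, (j < N.-1)%N -> is_inv_sqrt (Mpp j) (Gpp j)) :
  let M := Mmat N Mll Mpp in
  let Q := Qmat N nv nc sigma Rs in
  let Zh := Zhat Nh D S Gll in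
  let G := Gmat N nv (nc:=nc) Gtp in
  let P := Pmat N Rs Dl Gll Dt Gtt in
  spd (M *m Q *m Zh *m Q *m G *m P *m G^T *m Q *m Zh *m Q *m M).
Proof.
move=> M Q Zh G P.
have sigma_gt0 (j : 'I_N.-1) : 0 < sigma j /\ 0 < sigma j.+1.
  by have := ltn_ord j; rewrite ltn_predRL => ltjN; rewrite !Hsigma // ltnW.
have sM : M^T = M.
  apply: bdiag_sym => [i|j]; first by case: (HMll i (ltn_ord i)) => [[]].
  by case: (HMpp j (ltn_ord j)) => [[]].
have uM : M \in unitmx.
  by apply: unitmx_bdiag => [i|j]; apply: inv_sqrt_unitmx;
    [exact: HMll | exact: HMpp].
have sQ : Q^T = Q by apply: bdiag_sym => *; rewrite tr_scalar_mx.
have uQ : Q \in unitmx.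
  apply: unitmx_bdiag => [i|j]; apply/unitmx_scalar/lt0r_neq0.
    by rewrite mulr_gt0 ?qV_gt0 ?Hsigma ?sqrtr_gt0.
  by case: (sigma_gt0 j) => *; rewrite divr_gt0 ?qC_gt0 ?sqrtr_gt0.
have uG : G \in unitmx.
  by apply: unitmx_bdiag => [i|j]; rewrite ?unitmx1 // unitmx_inv HGtp.
have spdP : spd P.
  apply: spd_bdiag => [i|j]; apply: spdZ; rewrite ?invr_gt0 ?exprn_gt0 //.
    exact/spd_invmx/HDl.
  exact: HDt.
have -> : M *m Q *m Zh *m Q *m G *m P *m G^T *m Q *m Zh *m Q *m M =
  (Q *m Zh *m Q *m M)^T *m ((G^T)^T *m P *m G^T) *m (Q *m Zh *m Q *m M).
  by rewrite !trmx_mul trmxK sM sQ Zhat_sym // !mulmxA.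
apply: spd_congr; first by apply: spd_congr; rewrite ?unitmx_tr.
by rewrite !unitmx_mul uQ HZhat uM.
Qed.
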